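(* Let $G=\prod_{i=1}^tK[a_i,b_i]$ with $2\le b_1\le\cdots\le b_t$. Let $S$ be an irredundant set in $G$ and let $T\subseteq\mathrm{pn}[S]$ be chosen so that each vertex of $S$ has exactly one private neighbor in $T$. If $v_1,v_2\in T$ are distinct with $p(v_1)=p(v_2)$, then $v_1,v_2\in\mathrm{Lon}(S)$.
   Context: $K[a,b]$ is the balanced complete $b$-partite graph with $b$ parts of size $a$. Label the vertices of $K[a_i,b_i]$ by $\{0,\dots,a_ib_i-1\}$ so that two are adjacent iff they are not congruent mod $b_i$. A vertex $v$ of the direct product $\prod_i K[a_i,b_i]$ is a tuple $(v(1),\dots,v(t))$, and $p(v)=(v(1)\bmod b_1,\dots,v(t)\bmod b_t)$; $u,v$ are adjacent iff $p(u),p(v)$ differ in every coordinate. For $S\subseteq V(G)$, $v\in S$: $\mathrm{pn}[v;S]=N[v]\setminus N[S\setminus\{v\}]$ (closed neighborhoods), $\mathrm{pn}[S]=\bigcup_{v\in S}\mathrm{pn}[v;S]$; $S$ is irredundant if every $\mathrm{pn}[v;S]$ is nonempty. $\mathrm{Lon}(S)$ is the set of vertices of $S$ isolated in $G[S]$. *)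

From mathcomp Require Import all_boot.
Set Implicit Arguments. Unset Strict Implicit. Unset Printing Implicit Defensive.

Definition vtx (t : nat) (a b : 'I_t -> nat) : finType :=
  {dffun forall i : 'I_t, 'I_(a i * b i)}.

Section Graph.
Variables (t : nat) (a b : 'I_t -> nat).
Local Notation V := (vtx a b).

Definition pr (v : V) : {ffun 'I_t -> nat} := [ffun i => (v i : nat) %% b i].

Definition adj (u v : V) : bool := [forall i, pr u i != pr v i].

Definition cnbr (v : V) : {set V} := [set u | (u == v) || adj v u].
Definition cnbrS (S : {set V}) : {set V} := \bigcup_(v in S) cnbr v.

Definition pn (v : V) (S : {set V}) : {set V} := cnbr v :\: cnbrS (S :\ v).
Definition pnS (S : {set V}) : {set V} := \bigcup_(v in S) pn v S.

Definition irredundant (S : {set V}) : bool := [forall v in S, pn v S != set0].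

Definition Lon (S : {set V}) : {set V} := [set v in S | [forall u in S, ~~ adj v u]].
End Graph.

From mathcomp Require Import all_boot.

Set Implicit Arguments.
Unset Strict Implicit.
Unset Printing Implicit Defensive.

(* Let v1 and v2 be the private neighbours in T of x and y in S; since each
   vertex of S has only one of them in T, x <> y.  Adjacency depends only on
   the projection p, so if v1 were a proper neighbour of x then x would also be
   adjacent to v2, contradicting the privacy of v2 for y.  Hence v1 = x, and a
   vertex of S that is its own private neighbour has no neighbour in S. *)

Section ProductGraph.
Variables (t : nat) (a b : 'I_t -> nat).
Local Notation V := (vtx a b).

Lemma adjC (u v : V) : adj u v = adj v u.
Proof. by apply/forallP/forallP => H i; rewrite eq_sym; apply: H. Qed.

Lemma adj_prl (u v w : V) : pr u = pr v -> adj u w = adj v w.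
Proof. by rewrite /adj => ->. Qed.

Lemma adjnn (u : V) : 0 < t -> ~~ adj u u.
Proof. by move=> ht; apply/forallP => /(_ (Ordinal ht)); rewrite eqxx. Qed.

Lemma pn_notin_cnbr (S : {set V}) (x y w : V) :
  w \in pn x S -> y \in S -> y != x -> w \notin cnbr y.
Proof.
rewrite inE => /andP [wNS _] yS yx; apply: contra wNS => wy.
by apply/bigcupP; exists y; rewrite // !inE yx.
Qed.

Lemma pn_owners_neq (S T : {set V}) (x y v1 v2 : V) :
    (forall v, v \in S -> #|pn v S :&: T| = 1) -> x \in S ->
    v1 \in pn x S -> v2 \in pn y S -> v1 \in T -> v2 \in T -> v1 != v2 ->
  x != y.
Proof.
move=> hTone xS v1x v2y v1T v2T; apply: contraNneq => exy; subst y.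
have [z hz] := cards1P (introT eqP (hTone x xS)).
have : v1 \in pn x S :&: T by rewrite inE v1x.
have : v2 \in pn x S :&: T by rewrite inE v2y.
by rewrite hz !inE => /eqP-> /eqP->.
Qed.

Lemma pn_same_pr_eq_owner (S : {set V}) (x y v1 v2 : V) :
    x \in S -> x != y -> v1 \in pn x S -> v2 \in pn y S -> pr v1 = pr v2 ->
  v1 = x.
Proof.
move=> xS xy v1x v2y hp; apply/eqP; apply: contraT => v1x_neq.
have : v1 \in cnbr x by move: v1x; rewrite inE => /andP [].
rewrite inE (negPf v1x_neq) /= => x_v1.
have x_v2 : adj x v2 by rewrite adjC -(adj_prl _ hp) adjC.
by have := pn_notin_cnbr v2y xS xy; rewrite inE x_v2 orbT.
Qed.

Lemma self_pn_Lon (S : {set V}) (x : V) :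
  0 < t -> x \in S -> x \in pn x S -> x \in Lon S.
Proof.
move=> ht xS xx; rewrite inE xS; apply/forallP => u; apply/implyP => uS.
apply: contraT => /negPn x_u.
have ux : u != x by apply: contraTneq x_u => ->; apply: adjnn.
by have := pn_notin_cnbr xx uS ux; rewrite inE adjC x_u orbT.
Qed.

Lemma pnS_same_pr_Lon (S T : {set V}) (v1 v2 : V) :
    0 < t -> T \subset pnS S ->
    (forall v, v \in S -> #|pn v S :&: T| = 1) ->
    v1 \in T -> v2 \in T -> v1 != v2 -> pr v1 = pr v2 ->
  v1 \in Lon S.
Proof.
move=> ht hT hTone v1T v2T v12 hp.
have /bigcupP [x xS v1x] := subsetP hT _ v1T.
have /bigcupP [y _ v2y] := subsetP hT _ v2T.
have xy := pn_owners_neq hTone xS v1x v2y v1T v2T v12.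
have v1_eq_x := pn_same_pr_eq_owner xS xy v1x v2y hp; subst v1.
exact: self_pn_Lon.
Qed.

End ProductGraph.

Theorem lemma5p3 (t : nat) (a b : 'I_t -> nat)
  (ht : 0 < t)
  (hb2 : forall i : 'I_t, 2 <= b i)
  (hbmono : forall i j : 'I_t, i <= j -> b i <= b j)
  (S T : {set vtx a b})
  (hS : irredundant S)
  (hT : T \subset pnS S)
  (hTone : forall v, v \in S -> #|pn v S :&: T| = 1)
  (v1 v2 : vtx a b)
  (hv1 : v1 \in T) (hv2 : v2 \in T) (hne : v1 != v2)
  (hp : pr v1 = pr v2) :
  v1 \in Lon S /\ v2 \in Lon S.
Proof.
split; first exact: (pnS_same_pr_Lon ht hT hTone hv1 hv2 hne hp).
by apply: (pnS_same_pr_Lon ht hT hTone hv2 hv1); rewrite // eq_sym.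
Qed.
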